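(* Let $P$ be a finite lattice and $R\in\mathrm{Tr}(P)$. The fiber $\chi^{-1}\{\chi^R\}$ of $\chi\colon\mathrm{Tr}(P)\to\mathrm{End}^\circ(P)$ has a least element, namely $$\tilde R=\langle\{(x,y)\in P\times P: \chi^R(y)=x\text{ or }x=y\}\rangle.$$
   Context: For a finite lattice $(P,\le)$, a transfer system on $P$ is a partial order $R$ on $P$ refining $\le$ (i.e. $x\,R\,y\Rightarrow x\le y$) that is closed under restriction: if $x\,R\,z$ and $y\le z$ then $(x\wedge y)\,R\,y$. $\mathrm{Tr}(P)$ is the set of transfer systems ordered by inclusion of relations. For a set $Q$ of pairs $(x,y)$ with $x\le y$, $\langle Q\rangle$ is the transfer system generated by $Q$, i.e. the intersection of all transfer systems containing $Q$. For $R\in\mathrm{Tr}(P)$, $\chi^R(x)$ is the least element of $\{y: y\,R\,x\}$ (which exists). $\mathrm{End}^\circ(P)$ is the set of interior operators (monotone $f$ with $f(x)\le x$, $f\circ f=f$), and $\chi\colon R\mapsto\chi^R$ lands in it. *)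

From HB Require Import structures.
From mathcomp Require Import all_boot all_order.
From Stdlib Require Import ClassicalEpsilon.
Set Implicit Arguments. Unset Strict Implicit. Unset Printing Implicit Defensive.
Import Order.TTheory.
Local Open Scope order_scope.

Definition relP (T : Type) := T -> T -> Prop.

Definition is_transfer d (P : finLatticeType d) (R : relP P) : Prop :=
  [/\ (forall x, R x x),
      (forall x y, R x y -> R y x -> x = y),
      (forall x y z, R x y -> R y z -> R x z),
      (forall x y, R x y -> x <= y)
    & (forall x y z, R x z -> y <= z -> R (x `&` y) y)].

Definition gen_transfer d (P : finLatticeType d) (Q : relP P) : relP P :=
  fun x y => forall S : relP P, is_transfer S ->
    (forall a b, Q a b -> S a b) -> S x y.

Definition least_below d (P : finLatticeType d) (R : relP P) (x y : P) : Prop :=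
  R y x /\ forall z, R z x -> y <= z.

(* chi^R(x): the least element of {y : y R x} (defaults to x if none exists,
   which never happens for a transfer system). *)
Definition chi d (P : finLatticeType d) (R : relP P) (x : P) : P :=
  match excluded_middle_informative (exists y, least_below R x y) with
  | left h => proj1_sig (constructive_indefinite_description _ h)
  | right _ => x
  end.

From mathcomp Require Import all_boot all_order.
From Stdlib Require Import ClassicalEpsilon FunctionalExtensionality.
Set Implicit Arguments. Unset Strict Implicit. Unset Printing Implicit Defensive.
Import Order.TTheory.
Local Open Scope order_scope.

(* For every transfer system S and every x, the set {y : y S x} is
   closed under binary meets (restrict y S x along z <= x, then compose with
   z S x), so in a finite lattice it has a least element, which is chi^S(x).
   Consequently chi^S is characterised by two facts: chi^S(x) S x, and
   chi^S(x) <= y whenever y S x.  Hence if S is contained in a transfer system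
   T and already relates chi^T(x) to x, then chi^S(x) = chi^T(x).

   The theorem follows:
   R~ = <Q> with Q = {(chi^R y, y)} plus the diagonal lies in R and contains
   each (chi^R x, x), so chi^{R~} = chi^R; and any S with chi^S = chi^R
   contains Q, hence contains R~. *)

Section ChiOfTransfer.
Variables (d : Order.disp_t) (P : finLatticeType d).

Lemma transfer_meet (S : relP P) (x y z : P) :
  is_transfer S -> S y x -> S z x -> S (y `&` z) x.
Proof.
case=> _ _ Strans Sle Srestr Syx Szx.
exact: Strans (Srestr _ _ _ Syx (Sle _ _ Szx)) Szx.
Qed.

Lemma least_below_in_seq (S : relP P) (x : P) (s : seq P) :
  is_transfer S ->
  exists2 m, S m x & forall z, z \in s -> S z x -> m <= z.
Proof.
move=> HS; elim: s => [|y s [m Smx m_least]].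
  by exists x => [|z]; [case: HS | rewrite in_nil].
case: (excluded_middle_informative (S y x)) => [Syx|nSyx].
  exists (y `&` m); first exact: transfer_meet.
  move=> z; rewrite in_cons => /orP [/eqP -> _|zs Szx]; first exact: leIl.
  exact: le_trans (leIr _ _) (m_least _ zs Szx).
exists m => // z; rewrite in_cons => /orP [/eqP -> //|]; exact: m_least.
Qed.

Lemma exists_least_below (S : relP P) (x : P) :
  is_transfer S -> exists y, least_below S x y.
Proof.
move=> HS; have [m Smx m_least] := least_below_in_seq x (enum P) HS.
by exists m; split=> // z; apply: m_least; rewrite mem_enum.
Qed.

Lemma chi_least_below (S : relP P) (x : P) :
  is_transfer S -> least_below S x (chi S x).
Proof.
move=> HS; rewrite /chi; case: excluded_middle_informative => [ex|nex].
  exact: proj2_sig (constructive_indefinite_description _ ex).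
by case: nex; apply: exists_least_below.
Qed.

Lemma least_below_unique (S : relP P) (x y z : P) :
  least_below S x y -> least_below S x z -> y = z.
Proof. by move=> [Syx y_least] [Szx z_least]; apply/le_anti; rewrite y_least ?z_least. Qed.

Lemma chi_sub_transfer (S T : relP P) (x : P) :
  is_transfer S -> is_transfer T -> (forall a b, S a b -> T a b) ->
  S (chi T x) x -> chi S x = chi T x.
Proof.
move=> HS HT subST SchiT; apply: least_below_unique (chi_least_below x HS) _.
split=> // z /subST; exact: (chi_least_below x HT).2.
Qed.

Lemma le_is_transfer : is_transfer (fun x y : P => x <= y).
Proof.
split=> // [x y xy yx|x y z|x y z _ _]; first by apply/le_anti; rewrite xy yx.
  exact: le_trans.
exact: leIr.
Qed.

End ChiOfTransfer.

Section GeneratedTransfer.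
Variables (d : Order.disp_t) (P : finLatticeType d) (Q : relP P).

Lemma gen_transfer_incl (a b : P) : Q a b -> gen_transfer Q a b.
Proof. by move=> Qab S _; apply. Qed.

Lemma gen_transfer_least (S : relP P) :
  is_transfer S -> (forall a b, Q a b -> S a b) ->
  forall a b, gen_transfer Q a b -> S a b.
Proof. by move=> HS QS a b; apply. Qed.

Lemma gen_transfer_is_transfer :
  (forall a b, Q a b -> a <= b) -> is_transfer (gen_transfer Q).
Proof.
move=> Qle.
have genle := gen_transfer_least (le_is_transfer P) Qle.
split.
- by move=> x S [Srefl _ _ _ _].
- by move=> x y xy yx; apply/le_anti; rewrite !genle.
- move=> x y z xy yz S HS QS; case: (HS) => _ _ Strans _ _.
  exact: Strans (xy S HS QS) (yz S HS QS).
- exact: genle.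
- move=> x y z xz yz S HS QS; case: (HS) => _ _ _ _ Srestr.
  exact: Srestr (xz S HS QS) yz.
Qed.

End GeneratedTransfer.

Theorem theorem2p12 (d : Order.disp_t) (P : finLatticeType d) (R : relP P) :
  is_transfer R ->
  let Rt := gen_transfer (fun x y : P => chi R y = x \/ x = y) in
  [/\ is_transfer Rt,
      chi Rt = chi R
    & forall S : relP P, is_transfer S -> chi S = chi R ->
        forall x y, Rt x y -> S x y].
Proof.
move=> HR Rt.
set Q := fun x y : P => chi R y = x \/ x = y.
have QS : forall S, is_transfer S -> chi S = chi R -> forall a b, Q a b -> S a b.
  move=> S HS chiS a b [<-|->]; last by case: HS.
  by rewrite -chiS; case: (chi_least_below b HS).
have RtR := gen_transfer_least HR (QS R HR erefl).
have HRt : is_transfer Rt.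
  apply: gen_transfer_is_transfer => a b /(QS R HR erefl).
  by case: HR => _ _ _ Rle _; apply: Rle.
split=> //; last by move=> S HS chiS; exact: gen_transfer_least HS (QS S HS chiS).
apply: functional_extensionality => x.
by apply: chi_sub_transfer HRt HR RtR _; apply: gen_transfer_incl; left.
Qed.
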